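(* Let $D\ge1$, $q\ge2$, consider the Hamming scheme $\mathrm H(D,q)$ on $X=\mathcal Q^D$, and let $x=(0,\dots,0)$. Let $Y\subseteq X$ with $1<|Y|<|X|$, $\chi=\chi_Y$, $\delta_x=\delta_x(\chi)$, $\delta^*=\delta^*(\chi)$. Suppose $t\in\{1,\dots,D\}$ is such that for every $1\le r\le t$ at least one of $$|\{r\le j\le D-r:E_j\chi\ne0\}|\le\delta_x-r,\qquad |\{r\le i\le D-r:E_i^*(x)\chi\ne0\}|\le\delta^*-r$$ holds. Then for every $0\le k\le D$, the number of words $y\in Y$ of Hamming weight $k$ whose support is disjoint from a given $t$-subset $S\subseteq\{1,\dots,D\}$ does not depend on $S$; consequently, the supports of the words of weight $k$ in $Y$ (counted with multiplicity) form a $t$-design on the point set $\{1,\dots,D\}$ (whenever there is at least one such word). In particular this holds without assuming $Y$ is linear.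
   Context: $\mathcal Q=\{0,\dots,q-1\}$. The Hamming scheme $\mathrm H(D,q)$ has relations $R_i=\{(u,v):u,v\text{ differ in exactly }i\text{ coordinates}\}$, associate matrices $A_i$, and primitive idempotents $E_0=|X|^{-1}J,E_1,\dots,E_D$ in the standard (Krawtchouk) cometric ordering. $V=\mathbb C^X$, $\chi_Y=\sum_{y\in Y}\hat y$. $E_i^*(x)$ is the diagonal matrix with $(E_i^*(x))_{yy}=1$ if $y$ differs from $x$ in exactly $i$ coordinates and $0$ otherwise. $\delta_x(\chi)=\min\{i\ne0:E_i^*(x)\chi\ne0\}$, $\delta^*(\chi)=\min\{j\ne0:E_j\chi\ne0\}$. The support of a word is the set of its nonzero coordinates. A (multiset) family of $k$-subsets of a $D$-set is a $t$-design if every $t$-subset is contained in the same number of members. *)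

From mathcomp Require Import all_boot all_order all_algebra all_field.
Set Implicit Arguments. Unset Strict Implicit. Unset Printing Implicit Defensive.
Import Order.TTheory GRing.Theory Num.Theory.
Local Open Scope ring_scope.

Definition word (D q : nat) := {ffun 'I_D -> 'I_q}.

Definition hdist D q (u v : word D q) : nat := #|[set i | u i != v i]|.

Definition wsupp D q (u : word D q) : {set 'I_D} := [set i | val (u i) != 0%N].
Definition hwt D q (u : word D q) : nat := #|wsupp u|.

Definition vec D q := word D q -> algC.
Definition mat D q := word D q -> word D q -> algC.
Definition mxv D q (M : mat D q) (v : vec D q) : vec D q :=
  fun u => \sum_(w : word D q) M u w * v w.
Definition nonzero D q (v : vec D q) : bool := [exists u, v u != 0].

Definition assoc D q (i : nat) : mat D q := fun u v => ((hdist u v == i)%:R : algC).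

Definition kraw (D q j i : nat) : algC :=
  \sum_(h < j.+1) (-1) ^+ h * (q - 1)%:R ^+ (j - h) * ('C(i, h))%:R * ('C(D - i, j - h))%:R.

(* primitive idempotents in the standard (Krawtchouk) cometric ordering:
   E_j = |X|^{-1} sum_i K_j(i) A_i *)
Definition Eidem D q (j : nat) : mat D q :=
  fun u v => (#|[set: word D q]|%:R)^-1 * \sum_(i < D.+1) kraw D q j i * @assoc D q i u v.

Definition Estar D q (i : nat) (x : word D q) : mat D q :=
  fun u v => ((u == v) && (hdist x u == i))%:R.

Definition chiv D q (Y : {set word D q}) : vec D q := fun y => ((y \in Y)%:R : algC).

(* delta_x(chi) = min { i <> 0 : E_i^*(x) chi <> 0 }   (default D+1 if empty) *)
Definition delta_x D q (x : word D q) (chi : vec D q) : nat :=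
  head D.+1 [seq i <- iota 1 D | nonzero (mxv (Estar i x) chi)].

(* delta^*(chi) = min { j <> 0 : E_j chi <> 0 }   (default D+1 if empty) *)
Definition delta_star D q (chi : vec D q) : nat :=
  head D.+1 [seq j <- iota 1 D | nonzero (mxv (@Eidem D q j) chi)].

From mathcomp Require Import all_boot all_order all_algebra all_field.
From mathcomp Require Import ring zify.
Import Order.TTheory GRing.Theory Num.Theory.
Set Implicit Arguments. Unset Strict Implicit. Unset Printing Implicit Defensive.
Local Open Scope ring_scope.

(* Let w_A(e,i) count the words of Y of weight i meeting the coordinate set A in e
   points; both claims say that w_S(0,k) and w_S(t,k) depend only on |S| = t, and we
   prove by induction on d <= t that w_A depends only on |A| = d.  Double counting the
   pairs (A, a in A) expresses the w_(A\a) through w_A, so the induction hypothesis makes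
   every difference w_A(e,.) - w_A'(e,.) equal to (-1)^(d-e) C(d,e) times the top one
   f = w_A(d,.) - w_A'(d,.).  The functions u |-> prod_(l in C) (q [u_l = 0] - 1) span
   the eigenspace of E_|C|, and summing them over the supersets C of A turns E_j chi = 0
   into the vanishing of a Krawtchouk transform of length D - 2d of f(d + .).  The two
   alternatives of the hypothesis are then uncertainty principles for that transform:
   f vanishes below delta_x (all nonzero weights of Y are >= delta_x) while its
   transform has few nonzero entries, or the transform vanishes below delta^* while f
   has few nonzero entries.  Either way f = 0, by comparing binomial moments. *)

Lemma mul_bin_split (i u : nat) :
  ('C(i, u) * i = u.+1 * 'C(i, u.+1) + u * 'C(i, u))%N.
Proof.
rewrite mul_bin_left; case: (leqP u i) => [le_ui|lt_iu].
  by rewrite -mulnDl subnK // mulnC.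
by rewrite bin_small // !muln0.
Qed.

(* Multiplying x by (i - a) kills the entry at a and shifts the moments:
   sum C(i,u) (i - a) x_i = (u+1) m_(u+1) + (u - a) m_u. *)
Lemma sparse_binomial_moments_eq0 (k N : nat) (x : nat -> algC) :
  (#|[set i : 'I_N.+1 | x i != 0%R]| <= k)%N ->
  (forall u, (u < k)%N -> \sum_(i < N.+1) 'C(i, u)%:R * x i = 0) ->
  forall i, (i <= N)%N -> x i = 0.
Proof.
elim: k x => [|k IH] x supp_x mom_x i le_iN.
  move: supp_x; rewrite leqn0 cards_eq0 => /eqP supp0.
  have : Ordinal (le_iN : (i < N.+1)%N) \notin [set i : 'I_N.+1 | x i != 0].
    by rewrite supp0 in_set0.
  by rewrite inE negbK => /eqP.
case: (boolP [exists a : 'I_N.+1, x a != 0]); last first.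
  rewrite negb_exists => /forallP x0.
  by have := x0 (Ordinal (le_iN : (i < N.+1)%N)); rewrite negbK => /eqP.
case/existsP=> a xa_neq0; exfalso.
pose x' i : algC := (i%:R - (a : nat)%:R) * x i.
have supp_x' : (#|[set i : 'I_N.+1 | x' i != 0%R]| <= k)%N.
  have sub : [set i : 'I_N.+1 | x' i != 0] \subset [set i : 'I_N.+1 | x i != 0] :\ a.
    apply/subsetP => j; rewrite !inE /x' mulf_eq0 negb_or => /andP [ja xj].
    by rewrite xj andbT; apply: contra ja => /eqP ->; rewrite subrr.
  apply: leq_trans (subset_leq_card sub) _.
  by move: supp_x; rewrite (cardsD1 a) inE xa_neq0 /= add1n ltnS.
have mom_x' u : (u < k)%N -> \sum_(i < N.+1) 'C(i, u)%:R * x' i = 0.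
  move=> lt_uk.
  have shift (j : 'I_N.+1) : 'C(j, u)%:R * x' j =
      u.+1%:R * ('C(j, u.+1)%:R * x j) + (u%:R - (a : nat)%:R) * ('C(j, u)%:R * x j).
    have := congr1 (fun n => n%:R : algC) (mul_bin_split j u).
    rewrite /= natrD !natrM /x' => B.
    transitivity (('C(j, u)%:R * (j : nat)%:R) * x j - (a : nat)%:R * ('C(j, u)%:R * x j)).
      by ring.
    by rewrite B; ring.
  rewrite (eq_bigr _ (fun j _ => shift j)) big_split /= -!mulr_sumr.
  by rewrite mom_x // mom_x ?(ltn_trans lt_uk) // !mulr0 addr0.
have x_eq0 (j : 'I_N.+1) : j != a -> x j = 0.
  move=> ja; have /eqP := IH x' supp_x' mom_x' j (ltn_ord j).
  rewrite /x' mulf_eq0 subr_eq0 eqr_nat => /orP [ja'|/eqP //].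
  by move: ja; rewrite -(inj_eq val_inj) ja'.
have := mom_x 0%N (ltn0Sn k).
rewrite (bigD1 a) //= big1 ?addr0 => [|j ja]; last by rewrite x_eq0 // mulr0.
by rewrite bin0 mul1r => /eqP; rewrite (negbTE xa_neq0).
Qed.

Lemma natr_subn1D1 (q : nat) : (0 < q)%N -> (q%:R : algC) = (q - 1)%:R + 1.
Proof. by move=> q_gt0; rewrite natr1 subn1 prednK. Qed.

Lemma coef_exp1ZX (c : algC) n k : ((1 + c *: 'X) ^+ n)`_k = c ^+ k * 'C(n, k)%:R.
Proof.
rewrite addrC exprD1n coef_sum.
under eq_bigr => i _ do rewrite coefMn exprZn coefZ coefXn.
case: (ltnP k n.+1) => [lt_kn|le_nk].
  rewrite (bigD1 (Ordinal lt_kn)) //= eqxx mulr1 big1 ?addr0 => [|i ik].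
    by rewrite mulr_natr.
  suff /negbTE -> : k != i by rewrite mulr0 mul0rn.
  by apply: contra ik => /eqP ki; apply/eqP/val_inj.
rewrite bin_small // mulr0 big1 // => i _.
suff /negbTE -> : k != i by rewrite mulr0 mul0rn.
by apply/eqP => ki; move: (ltn_ord i); rewrite -ki; lia.
Qed.

Section Krawtchouk.

Variable q : nat.
Definition kraw_gen (N i : nat) : {poly algC} :=
  (1 + (q - 1)%:R *: 'X) ^+ (N - i) * (1 - 'X) ^+ i.

Lemma kraw_coef N j i : kraw N q j i = (kraw_gen N i)`_j.
Proof.
rewrite /kraw /kraw_gen mulrC coefM; apply: eq_bigr => h _.
have -> : (1 - 'X : {poly algC}) = 1 + (-1) *: 'X by rewrite scaleN1r.
by rewrite !coef_exp1ZX; ring.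
Qed.

Lemma size_exp_leq2 (p : {poly algC}) n : (size p <= 2)%N -> (size (p ^+ n) <= n.+1)%N.
Proof.
move=> sp; apply: leq_trans (size_poly_exp_leq _ _) _.
rewrite ltnS -{2}(mul1n n) leq_mul2r; apply/orP; right; lia.
Qed.

Lemma size_kraw_gen N i : (i <= N)%N -> (size (kraw_gen N i) <= N.+1)%N.
Proof.
move=> le_iN; apply: leq_trans (size_polyMleq _ _) _.
have s1 : (size (1 + (q - 1)%:R *: 'X : {poly algC})%R <= 2)%N.
  apply: leq_trans (size_polyD _ _) _; rewrite geq_max size_polyC.
  rewrite (leq_trans (size_scale_leq _ _)) ?size_polyX ?andbT //.
  by case: (_ != _).
have s2 : (size (1 - 'X : {poly algC})%R <= 2)%N.
  apply: leq_trans (size_polyD _ _) _.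
  by rewrite geq_max size_polyC size_polyN size_polyX; case: (_ != _).
move: (size_exp_leq2 (N - i) s1) (size_exp_leq2 i s2).
by case: (size _) => [|a]; case: (size _) => [|b] /=; lia.
Qed.

Lemma coef_XaddD1 j u : ((('X + 1) ^+ j : {poly algC}))`_u = 'C(j, u)%:R.
Proof. by rewrite addrC -['X]scale1r coef_exp1ZX expr1n mul1r. Qed.

(* Substituting X -> X + 1 in the generating polynomial leaves the factor (-X)^i. *)
Lemma kraw_binomial_moment_eq0 N u i : (u < i)%N -> (i <= N)%N ->
  \sum_(j < N.+1) 'C(j, u)%:R * kraw N q j i = 0.
Proof.
move=> lt_ui le_iN.
have -> : \sum_(j < N.+1) 'C(j, u)%:R * kraw N q j i = (kraw_gen N i \Po ('X + 1))`_u.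
  symmetry; rewrite coef_comp_poly.
  rewrite (big_ord_widen N.+1 (fun j => (kraw_gen N i)`_j * (('X + 1) ^+ j)`_u))
    ?size_kraw_gen //.
  rewrite big_mkcond /=; apply: eq_bigr => j _.
  rewrite coef_XaddD1 kraw_coef mulrC; case: ifP => // lt_Nj.
  by rewrite nth_default ?mulr0 // leqNgt lt_Nj.
rewrite /kraw_gen rmorphM !rmorphXn /= rmorphB rmorphD /= comp_polyX comp_polyC.
rewrite linearZ /= comp_polyX.
have -> : (1%:P - ('X + 1) : {poly algC}) = - 'X by rewrite opprD addrCA subrr addr0.
by rewrite exprNn mulrA coefMXn lt_ui.
Qed.

(* The change of basis from the Krawtchouk numbers to binomial moments is
   triangular: K_j(i) = sum_u C(i,u) T_(j,u) with T_(j,u) = 0 for j < u. *)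
Definition kraw_tri (N j u : nat) : algC :=
  (- (q%:R)) ^+ u * (if (j < u)%N then 0 else ((1 + (q - 1)%:R *: 'X) ^+ (N - u))`_(j - u)).

Lemma kraw_tri_diag N j : kraw_tri N j j = (- (q%:R)) ^+ j.
Proof.
rewrite /kraw_tri ltnn subnn; elim: (N - j)%N => [|n IH]; first by rewrite expr0 coefC mulr1.
by rewrite exprS coef0M coefD coefC coefZ coefX mulr0 addr0 mul1r.
Qed.

Lemma kraw_tri_up N j u : (j < u)%N -> kraw_tri N j u = 0.
Proof. by move=> lt_ju; rewrite /kraw_tri lt_ju mulr0. Qed.

Hypothesis q_gt0 : (0 < q)%N.

Lemma kraw_gen_binomial N i : (i <= N)%N ->
  kraw_gen N i = \sum_(u < i.+1)
    ('C(i, u)%:R * (- (q%:R)) ^+ u) *: ('X^u * (1 + (q - 1)%:R *: 'X) ^+ (N - u)).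
Proof.
move=> le_iN; rewrite /kraw_gen; set A := 1 + _ *: 'X.
have -> : (1 - 'X : {poly algC}) = A + (- (q%:R)) *: 'X.
  by rewrite /A (natr_subn1D1 q_gt0) scaleNr scalerDl scale1r opprD addrA addrK.
rewrite [(A + _) ^+ _]exprDn mulr_sumr; apply: eq_bigr => u _.
have le_ui : (u <= i)%N by rewrite -ltnS.
rewrite exprZn mulrnAr mulrA -exprD.
have -> : (N - i + (i - u) = N - u)%N by lia.
by rewrite -scalerAr (mulrC (A ^+ _)) scalerMnl mulr_natl.
Qed.

Lemma kraw_triE N j i : (i <= N)%N ->
  kraw N q j i = \sum_(u < N.+1) 'C(i, u)%:R * kraw_tri N j u.
Proof.
move=> le_iN; rewrite kraw_coef kraw_gen_binomial // coef_sum.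
under eq_bigr => u _ do rewrite coefZ coefXnM -mulrA.
rewrite (big_ord_widen N.+1 (fun u => 'C(i, u)%:R * kraw_tri N j u)) ?ltnS //.
rewrite big_mkcond /=; apply: eq_bigr => u _.
by case: ifP => // lt_iu; rewrite bin_small ?mul0r //; lia.
Qed.

Lemma kraw_transform_binomial_moments N (x : nat -> algC) s :
  (forall j, (j < s)%N -> (j <= N)%N -> \sum_(i < N.+1) kraw N q j i * x i = 0) ->
  forall u, (u < s)%N -> \sum_(i < N.+1) 'C(i, u)%:R * x i = 0.
Proof.
move=> kx0; pose m u := \sum_(i < N.+1) 'C(i, u)%:R * x i.
have kxE j : \sum_(i < N.+1) kraw N q j i * x i = \sum_(u < N.+1) kraw_tri N j u * m u.
  under eq_bigr => i _ do rewrite kraw_triE // ?(ltnSE (ltn_ord i)) // mulr_suml.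
  rewrite exchange_big /=; apply: eq_bigr => u _; rewrite /m mulr_sumr.
  by apply: eq_bigr => i _; ring.
elim/ltn_ind => u IH lt_us; rewrite -/(m u).
case: (leqP u N) => [le_uN|lt_Nu]; last first.
  by rewrite /m big1 // => i _; rewrite bin_small ?mul0r // (leq_trans (ltn_ord i)).
have := kx0 u lt_us le_uN; rewrite kxE (bigD1 (Ordinal (le_uN : (u < N.+1)%N))) //= big1.
  rewrite addr0 kraw_tri_diag => /eqP; rewrite mulf_eq0 => /orP [|/eqP //].
  by rewrite expf_eq0 oppr_eq0 pnatr_eq0; lia.
move=> v vu; case: (ltnP v u) => [lt_vu|le_uv].
  by rewrite /m (IH v lt_vu (ltn_trans lt_vu lt_us)) mulr0.
rewrite kraw_tri_up ?mul0r // ltn_neqAle le_uv andbT.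
by apply: contra vu => /eqP uv; apply/eqP/val_inj; rewrite /= uv.
Qed.

Lemma kraw_transform_low_eq0 N (x : nat -> algC) s :
  (forall j, (j < s)%N -> (j <= N)%N -> \sum_(i < N.+1) kraw N q j i * x i = 0) ->
  (#|[set i : 'I_N.+1 | x i != 0%R]| <= s)%N ->
  forall i, (i <= N)%N -> x i = 0.
Proof.
move=> kx0 supp_x; apply: (sparse_binomial_moments_eq0 supp_x).
exact: kraw_transform_binomial_moments.
Qed.

Lemma kraw_transform_sparse_eq0 N (x y : nat -> algC) (c : algC) s : c != 0 ->
  (forall j, (j <= N)%N -> y j = c * \sum_(i < N.+1) kraw N q j i * x i) ->
  (forall i, (i < s)%N -> x i = 0) ->
  (#|[set j : 'I_N.+1 | y j != 0%R]| <= s)%N ->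
  forall i, (i <= N)%N -> x i = 0.
Proof.
move=> c_neq0 yE x_low supp_y.
have y0 : forall j, (j <= N)%N -> y j = 0.
  apply: (sparse_binomial_moments_eq0 supp_y) => u lt_us.
  under eq_bigr => j _ do rewrite yE ?(ltnSE (ltn_ord j)) // mulr_sumr mulr_sumr.
  rewrite exchange_big /= big1 // => i _.
  case: (ltnP i s) => [lt_is|le_si]; first by rewrite big1 // => j _; rewrite x_low // !mulr0.
  transitivity (c * x i * \sum_(j < N.+1) 'C(j, u)%:R * kraw N q j i).
    by rewrite mulr_sumr; apply: eq_bigr => j _; ring.
  by rewrite kraw_binomial_moment_eq0 ?mulr0 // (leq_trans lt_us, ltnSE (ltn_ord i)).
apply: (@kraw_transform_low_eq0 N x N.+1).
  move=> j _ le_jN; have /eqP := y0 j le_jN.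
  by rewrite yE // mulf_eq0 (negbTE c_neq0) => /eqP.
by apply: leq_trans (max_card _) _; rewrite card_ord.
Qed.

Lemma kraw_gen_convolution n d i : (d <= i)%N -> (i + d <= n)%N ->
  \sum_(e < d.+1) ('C(d, e)%:R * (q - 1)%:R ^+ (d - e)) *: kraw_gen (n - d) (i - e)
  = (q%:R ^+ d) *: kraw_gen (n - d - d) (i - d).
Proof.
move=> le_di le_idn.
pose A : {poly algC} := 1 + (q - 1)%:R *: 'X; pose B : {poly algC} := 1 - 'X.
pose P0 := A ^+ (n - d - i) * B ^+ (i - d).
have split_gen (e : 'I_d.+1) : kraw_gen (n - d) (i - e) = P0 * (A ^+ e * B ^+ (d - e)).
  have le_ed : (e <= d)%N by rewrite -ltnS.
  rewrite /kraw_gen -/A -/B /P0.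
  have -> : (n - d - (i - e) = (n - d - i) + e)%N by lia.
  have -> : (i - e = (i - d) + (d - e))%N by lia.
  by rewrite !exprD; ring.
under eq_bigr => e _ do rewrite split_gen scalerAr.
rewrite -mulr_sumr.
have -> : \sum_(e < d.+1) ('C(d, e)%:R * (q - 1)%:R ^+ (d - e)) *: (A ^+ e * B ^+ (d - e))
          = ((q - 1)%:R *: B + A) ^+ d.
  rewrite exprDn; apply: eq_bigr => e _.
  by rewrite exprZn -scalerAl scalerMnl mulr_natl (mulrC (A ^+ _)).
have -> : (q - 1)%:R *: B + A = (q%:R : algC)%:P.
  by rewrite /B /A (natr_subn1D1 q_gt0) -!mul_polyC rmorphD /= polyC1; ring.
rewrite /kraw_gen -/A -/B.
have -> : (n - d - d - (i - d) = n - d - i)%N by lia.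
by rewrite -rmorphXn /= mulrC mul_polyC.
Qed.

Lemma kraw_convolution n d i j : (d <= i)%N -> (i + d <= n)%N ->
  \sum_(e < d.+1) 'C(d, e)%:R * (q - 1)%:R ^+ (d - e) * kraw (n - d) q j (i - e)
  = q%:R ^+ d * kraw (n - d - d) q j (i - d).
Proof.
move=> le_di le_idn; rewrite kraw_coef -coefZ -(kraw_gen_convolution le_di le_idn).
by rewrite coef_sum; apply: eq_bigr => e _; rewrite coefZ kraw_coef.
Qed.

End Krawtchouk.

Lemma sum_subsets_prod_coef n (U : {set 'I_n}) (f : 'I_n -> algC) j :
  \sum_(Z : {set 'I_n} | (Z \subset U) && (#|Z| == j)) \prod_(l in Z) f l
  = (\prod_(l in U) (1 + f l *: 'X))`_j.
Proof.
have -> : \prod_(l in U) (1 + f l *: 'X) = \prod_l ((if l \in U then f l *: 'X else 0) + 1).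
  rewrite big_mkcond /=; apply: eq_bigr => l _.
  by case: ifP => _; [rewrite addrC | rewrite add0r].
rewrite bigA_distr coef_sum [RHS](bigID (fun Z : {set 'I_n} => Z \subset U)) /=.
rewrite [X in _ = _ + X]big1 ?addr0; last first.
  by move=> Z /subsetPn [l lZ lU]; rewrite (bigD1 l) //= lZ (negbTE lU) mul0r coef0.
rewrite [RHS]big_mkcond [LHS]big_mkcond /=; apply: eq_bigr => Z _.
case ZU: (Z \subset U) => //=.
have -> : \prod_i (if i \in Z then (if i \in U then f i *: 'X else 0) else 1)
        = (\prod_(l in Z) f l) *: 'X^#|Z|.
  rewrite -big_mkcond /= (eq_bigr (fun l => f l *: 'X)) => [|l lZ].
    by rewrite scaler_prod prodr_const.
  by rewrite (subsetP ZU l lZ).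
by rewrite coefZ coefXn eq_sym; case: (_ == _); rewrite ?mulr1 ?mulr0.
Qed.

Section HammingWeights.

Variables D q : nat.

(* q E_1 for the scheme H(1,q). *)
Definition coord_kernel (a b : 'I_q) : algC := if a == b then (q - 1)%:R else -1.

(* coord_weight C (wsupp u) = prod_(l in C) coord_kernel (u l) 0; these functions of u
   span the eigenspace of E_#|C|. *)
Definition coord_weight (C B : {set 'I_D}) : algC :=
  \prod_(l in C) (if l \in B then -1 else (q - 1)%:R).

Lemma prod_coord_weight_poly (U B : {set 'I_D}) :
  \prod_(l in U) (1 + (if l \in B then -1 else (q - 1)%:R) *: 'X) = kraw_gen q #|U| #|U :&: B|.
Proof.
rewrite (bigID (fun l => l \in B)) /= mulrC /kraw_gen.
have -> : (#|U| - #|U :&: B| = #|U :\: B|)%N by rewrite -(cardsID B U); lia.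
congr (_ * _).
  rewrite (eq_bigl (fun l => l \in U :\: B)) => [|l]; last by rewrite !inE andbC.
  rewrite (eq_bigr (fun _ => 1 + (q - 1)%:R *: 'X)) ?prodr_const // => l.
  by rewrite inE => /andP [/negbTE -> _].
rewrite (eq_bigl (fun l => l \in U :&: B)) => [|l]; last by rewrite !inE.
rewrite (eq_bigr (fun _ => 1 - 'X)) ?prodr_const // => l.
by rewrite inE => /andP [_ ->]; rewrite scaleN1r.
Qed.

Lemma coord_weightE (A S : {set 'I_D}) :
  coord_weight A S = (-1) ^+ #|S :&: A| * (q - 1)%:R ^+ (#|A| - #|S :&: A|).
Proof.
rewrite /coord_weight (bigID (fun l => l \in S)) /=.
have -> : (#|A| - #|S :&: A| = #|A :\: S|)%N by rewrite -(cardsID S A) setIC; lia.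
congr (_ * _).
  rewrite (eq_bigl (fun l => l \in S :&: A)) => [|l]; last by rewrite !inE andbC.
  by rewrite (eq_bigr (fun _ => -1)) ?prodr_const // => l; rewrite inE => /andP [-> _].
rewrite (eq_bigl (fun l => l \in A :\: S)) => [|l]; last by rewrite !inE andbC.
rewrite (eq_bigr (fun _ => (q - 1)%:R)) ?prodr_const // => l.
by rewrite inE => /andP [/negbTE -> _].
Qed.

Lemma kraw_hdist_subsets (u y : word D q) j :
  kraw D q j (hdist u y) = \sum_(Z : {set 'I_D} | #|Z| == j) \prod_(l in Z) coord_kernel (u l) (y l).
Proof.
have := sum_subsets_prod_coef [set: 'I_D] (fun l => coord_kernel (u l) (y l)) j.
rewrite (eq_bigl (fun Z : {set 'I_D} => #|Z| == j)) => [->|Z]; last by rewrite subsetT.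
rewrite (eq_bigr (fun l => 1 + (if l \in [set i | u i != y i] then -1 else (q - 1)%:R) *: 'X)).
  by rewrite prod_coord_weight_poly cardsT card_ord setTI kraw_coef.
by move=> l _; rewrite inE /coord_kernel; case: (u l == y l).
Qed.

Lemma sum_supersets_coord_weight (A B : {set 'I_D}) j' :
  \sum_(C : {set 'I_D} | (A \subset C) && (#|C :\: A| == j')) coord_weight C B
  = coord_weight A B * kraw (D - #|A|) q j' #|B :\: A|.
Proof.
rewrite (reindex_onto (fun Z => A :|: Z) (fun C => C :\: A)); last first.
  move=> C /andP [AC _]; apply/setP => l; rewrite !inE.
  by case lA: (l \in A) => //=; rewrite (subsetP AC l lA).
transitivity (\sum_(Z : {set 'I_D} | (Z \subset ~: A) && (#|Z| == j')) coord_weight (A :|: Z) B).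
  apply: eq_bigl => Z; rewrite subsetUl /=.
  case: (boolP (Z \subset ~: A)) => ZA.
    suff -> : (A :|: Z) :\: A = Z by rewrite eqxx andbT.
    apply/setP => l; rewrite !inE; case lZ: (l \in Z); rewrite ?orbT ?orbF ?andbT.
      by have := subsetP ZA l lZ; rewrite inE.
    by case: (l \in A).
  apply/negbTE; apply/andP => [[_ /eqP ZE]]; move/negP: ZA; apply.
  by rewrite -ZE; apply/subsetP => l; rewrite !inE; case: (l \in A).
rewrite (eq_bigr (fun Z => coord_weight A B * coord_weight Z B)); last first.
  move=> Z /andP [ZA _]; rewrite /coord_weight.
  rewrite (eq_bigl [predU A & Z]) ?bigU //; last by move=> l; rewrite !inE.
  rewrite -setI_eq0 -subset0; apply/subsetP => l; rewrite !inE => /andP [lA lZ].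
  by have := subsetP ZA l lZ; rewrite inE lA.
rewrite -mulr_sumr /coord_weight (sum_subsets_prod_coef (~: A)) prod_coord_weight_poly.
have -> : #|~: A| = (D - #|A|)%N by have := cardsC A; rewrite card_ord; lia.
by rewrite kraw_coef setIC -setDE.
Qed.

Hypothesis q_gt0 : (0 < q)%N.

Lemma sum_coord_kernel (b : 'I_q) (c : 'I_q -> algC) :
  \sum_a coord_kernel a b * c a = q%:R * c b - \sum_a c a.
Proof.
have kE a : coord_kernel a b * c a = q%:R * ((a == b)%:R * c a) - c a.
  by rewrite /coord_kernel (natr_subn1D1 q_gt0); case: (a == b); rewrite ?mul1r ?mul0r; ring.
rewrite (eq_bigr _ (fun a _ => kE a)) sumrB -mulr_sumr.
by rewrite (bigD1 b) //= eqxx mul1r big1 ?addr0 // => a /negbTE ->; rewrite mul0r.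
Qed.

Lemma sum_coord_kernel0 (b : 'I_q) : \sum_a coord_kernel a b = 0.
Proof.
have := sum_coord_kernel b (fun _ => 1).
by rewrite (eq_bigr (fun a => coord_kernel a b)) => [->|a _]; rewrite ?mulr1 // sumr_const card_ord subrr.
Qed.

Let a0 : 'I_q := Ordinal q_gt0.

Lemma coord_weight_kernel (C : {set 'I_D}) (u : word D q) :
  coord_weight C (wsupp u) = \prod_(l in C) coord_kernel (u l) a0.
Proof.
apply: eq_bigr => l _; rewrite /coord_kernel inE.
have -> : (val (u l) != 0%N) = (u l != a0) by rewrite -(inj_eq val_inj).
by case: (u l == a0).
Qed.

(* Coordinatewise value of sum_u prod_(l in Z) k(u_l, y_l) * prod_(l in C) k(u_l, 0). *)
Definition coord_factor (y : word D q) (Z C : {set 'I_D}) (l : 'I_D) : algC :=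
  if l \in Z then (if l \in C then q%:R * coord_kernel (y l) a0 else 0)
  else (if l \in C then 0 else q%:R).

Lemma prod_coord_factor_neq (y : word D q) (Z C : {set 'I_D}) :
  Z != C -> \prod_l coord_factor y Z C l = 0.
Proof.
move=> ZC; case: (boolP [exists l, (l \in Z) != (l \in C)]) => [/existsP [l lZC]|].
  rewrite (bigD1 l) //= /coord_factor.
  by move: lZC; case: (l \in Z); case: (l \in C) => //= _; rewrite mul0r.
rewrite negb_exists => /forallP ZC'; case/eqP: ZC; apply/setP => l.
by have := ZC' l; rewrite negbK => /eqP.
Qed.

Lemma prod_coord_factor_eq (y : word D q) (C : {set 'I_D}) :
  \prod_l coord_factor y C C l = q%:R ^+ D * coord_weight C (wsupp y).
Proof.
rewrite coord_weight_kernel.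
transitivity (\prod_l (q%:R * (if l \in C then coord_kernel (y l) a0 else 1))).
  by apply: eq_bigr => l _; rewrite /coord_factor; case: (l \in C); rewrite ?mulr1.
by rewrite big_split /= -big_mkcond /= prodr_const card_ord.
Qed.

Lemma kraw_coord_weight_eigen (y : word D q) (C : {set 'I_D}) j :
  \sum_(u : word D q) kraw D q j (hdist u y) * coord_weight C (wsupp u)
  = if #|C| == j then q%:R ^+ D * coord_weight C (wsupp y) else 0.
Proof.
under eq_bigr => u _ do rewrite kraw_hdist_subsets coord_weight_kernel mulr_suml.
rewrite exchange_big /=.
have sumZ (Z : {set 'I_D}) :
    \sum_(u : word D q) (\prod_(l in Z) coord_kernel (u l) (y l)) *
                        \prod_(l in C) coord_kernel (u l) a0
    = \prod_l coord_factor y Z C l.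
  have prodE (u : word D q) :
      (\prod_(l in Z) coord_kernel (u l) (y l)) * \prod_(l in C) coord_kernel (u l) a0
      = \prod_l ((if l \in Z then coord_kernel (u l) (y l) else 1) *
                 (if l \in C then coord_kernel (u l) a0 else 1)).
    by rewrite big_split /= -!big_mkcond.
  rewrite (eq_bigr _ (fun u _ => prodE u)).
  rewrite -(bigA_distr_bigA (fun l a => (if l \in Z then coord_kernel a (y l) else 1) *
                                         (if l \in C then coord_kernel a a0 else 1))).
  apply: eq_bigr => l _; rewrite /coord_factor.
  case: (l \in Z); case: (l \in C) => /=.
  - by rewrite sum_coord_kernel sum_coord_kernel0 subr0.
  - by under eq_bigr => a _ do rewrite mulr1; rewrite sum_coord_kernel0.
  - by under eq_bigr => a _ do rewrite mul1r; rewrite sum_coord_kernel0.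
  - by under eq_bigr => a _ do rewrite mulr1; rewrite sumr_const card_ord.
rewrite (eq_bigr _ (fun Z _ => sumZ Z)); case: ifP => Cj.
  rewrite (bigD1 C) //= prod_coord_factor_eq [X in _ + X]big1 ?addr0 // => Z /andP [_ ZC].
  by rewrite prod_coord_factor_neq.
by rewrite big1 // => Z Zj; rewrite prod_coord_factor_neq //; apply: contraFN Cj => /eqP <-.
Qed.

End HammingWeights.

Lemma sum_by_two_statistics (T : finType) (Y : {set T}) (a b : T -> nat) E I
    (F : nat -> nat -> algC) :
  (forall y, y \in Y -> (a y < E)%N) -> (forall y, y \in Y -> (b y < I)%N) ->
  \sum_(y in Y) F (a y) (b y)
  = \sum_(e < E) \sum_(i < I) F e i * #|[set y in Y | (b y == i) && (a y == e)]|%:R.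
Proof.
move=> aY bY.
transitivity (\sum_(y in Y) \sum_(e < E) \sum_(i < I)
                (if (b y == i) && (a y == e) then F e i else 0)).
  apply: eq_bigr => y Yy.
  rewrite (bigD1 (Ordinal (aY y Yy))) //= [X in _ + X]big1 ?addr0; last first.
    move=> e ey; apply: big1 => i _.
    suff /negbTE -> : a y != e by rewrite andbF.
    by apply: contra ey => /eqP ye; apply/eqP/val_inj.
  rewrite (bigD1 (Ordinal (bY y Yy))) //= !eqxx big1 ?addr0 // => i iy.
  suff /negbTE -> : b y != i by [].
  by apply: contra iy => /eqP yi; apply/eqP/val_inj.
rewrite exchange_big; apply: eq_bigr => e _; rewrite exchange_big; apply: eq_bigr => i _.
rewrite -big_mkcondr /= (eq_bigl (mem [set y in Y | (b y == i) && (a y == e)])).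
  by rewrite sumr_const mulr_natr.
by move=> y; rewrite !inE.
Qed.

Lemma natr_card_set_sum (T : finType) (Y : {set T}) (P : pred T) :
  (#|[set y in Y | P y]|%:R : algC) = \sum_(y in Y) (P y)%:R.
Proof.
rewrite -sumr_const (eq_bigl (fun y => (y \in Y) && P y)) => [|y]; last by rewrite inE.
by rewrite big_mkcondr; apply: eq_bigr => y _; case: (P y).
Qed.

Lemma card_delete_meet n (S A : {set 'I_n}) e :
  #|[set a in A | #|S :&: (A :\ a)| == e]|
  = ((#|S :&: A| == e.+1) * e.+1 + (#|S :&: A| == e) * (#|A| - e))%N.
Proof.
set k := #|S :&: A|.
have cardD a : a \in A -> #|S :&: (A :\ a)| = (k - (a \in S))%N.
  move=> aA; have -> : S :&: (A :\ a) = (S :&: A) :\ a.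
    by apply/setP => l; rewrite !inE; case: (l == a); case: (l \in S); case: (l \in A).
  by rewrite /k (cardsD1 a (S :&: A)) inE aA andbT; lia.
case: (eqVneq k e.+1) => [kE|kNe1].
  rewrite kE (gtn_eqF (ltnSn e)) mul1n mul0n addn0 -kE /k; apply: eq_card => a; rewrite !inE.
  case aA: (a \in A); rewrite ?andbF ?andbT //= cardD // kE.
  by case: (a \in S) => /=; [rewrite subn1 /= eqxx | rewrite subn0 (gtn_eqF (ltnSn e))].
case: (eqVneq k e) => [kE|kNe]; last first.
  rewrite mul0n add0n; apply/eqP; rewrite cards_eq0; apply/eqP/setP => a; rewrite !inE.
  case aA: (a \in A); rewrite ?andbF ?andbT //= cardD //.
  by case: (a \in S) => /=; apply/negbTE; move: kNe1 kNe; lia.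
rewrite mul0n mul1n add0n.
have -> : (#|A| - e = #|A :\: S|)%N by rewrite -(cardsID S A) setIC -/k kE; lia.
apply: eq_card => a; rewrite !inE andbC.
case aA: (a \in A); rewrite ?andbF ?andbT //= cardD //.
case aS: (a \in S) => /=; last by rewrite subn0 kE eqxx.
have : (0 < k)%N by rewrite /k card_gt0; apply/set0Pn; exists a; rewrite inE aS aA.
by rewrite -kE; case: (k) => // k' _; rewrite subn1 /= (ltn_eqF (ltnSn k')).
Qed.

Lemma subsetEcardI n (S B : {set 'I_n}) : (S \subset B) = (#|B :&: S| == #|S|).
Proof.
apply/idP/eqP => [/setIidPr -> // | h].
by apply/setIidPr/eqP; rewrite eqEcard subsetIr h leqnn.
Qed.

Lemma alternating_binomial_rec (f : nat -> algC) d :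
  (forall e, (e < d)%N -> e.+1%:R * f e.+1 + (d - e)%:R * f e = 0) ->
  forall e, (e <= d)%N -> f e = (-1) ^+ (d - e) * 'C(d, e)%:R * f d.
Proof.
move=> rec e le_ed; move: {2}(d - e)%N (erefl (d - e)%N) => k.
elim: k e le_ed => [|k IH] e le_ed dk.
  have -> : e = d by lia.
  by rewrite subnn binn expr0 !mul1r.
have lt_ed : (e < d)%N by lia.
have de_neq0 : (d - e)%:R != 0 :> algC by rewrite pnatr_eq0; lia.
apply: (mulfI de_neq0).
have -> : (d - e)%:R * f e = - (e.+1%:R * f e.+1).
  by apply/eqP; rewrite -subr_eq0 opprK addrC rec.
rewrite (IH e.+1 lt_ed); last by lia.
have binE : (e.+1%:R * 'C(d, e.+1)%:R = (d - e)%:R * 'C(d, e)%:R :> algC).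
  by rewrite -!natrM mul_bin_left.
have -> : (d - e = (d - e.+1).+1)%N by lia.
transitivity (- ((-1) ^+ (d - e.+1) * (e.+1%:R * 'C(d, e.+1)%:R) * f d)); first by ring.
by rewrite binE -(subnSK lt_ed) exprS; ring.
Qed.

Lemma head_filter_iota_leq (P : pred nat) a n j : (a <= j)%N -> (j < a + n)%N -> P j ->
  (head (a + n) [seq i <- iota a n | P i] <= j)%N.
Proof.
elim: n a => [|n IH] a le_aj lt_j Pj /=; first by lia.
case: ifP => Pa //=.
have lt_aj : (a < j)%N by rewrite ltn_neqAle le_aj andbT; apply: contraFN Pa => /eqP ->.
by rewrite -addSnnS; apply: IH => //; lia.
Qed.

Lemma head_filter_iota_min (P : pred nat) a n j : (a <= j)%N ->
  (j < head (a + n) [seq i <- iota a n | P i])%N -> ~~ P j.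
Proof.
elim: n a => [|n IH] a le_aj /=; first by rewrite addn0; lia.
case: ifP => Pa /= lt_j; first by lia.
case: (eqVneq a j) => [<-|aj]; first by rewrite Pa.
by apply: (IH a.+1); [rewrite ltn_neqAle aj | rewrite addSnnS].
Qed.

Lemma sum_ord_shift (G : nat -> algC) D d : (d + d <= D)%N ->
  (forall i, (i < d)%N -> G i = 0) -> (forall i, (D - d < i)%N -> G i = 0) ->
  \sum_(i < D.+1) G i = \sum_(i < (D - d - d).+1) G (d + i)%N.
Proof.
move=> le_dD G_low G_high.
rewrite -(big_mkord xpredT G) -(big_mkord xpredT (fun i => G (d + i)%N)).
rewrite (big_cat_nat _ (n := d)) //=; last by lia.
rewrite big_nat_cond big1 ?add0r; last by move=> i /andP [/andP [_ ?] _]; apply: G_low.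
rewrite (big_cat_nat _ (n := (D - d).+1)) //=; try lia.
rewrite [X in _ + X]big_nat_cond [X in _ + X]big1 ?addr0; last first.
  by move=> i /andP [/andP [? _] _]; apply: G_high.
rewrite -[X in \sum_(X <= i < _) _](add0n d) big_addn.
have -> : ((D - d).+1 - d = (D - d - d).+1)%N by lia.
by apply: eq_bigr => i _; rewrite addnC.
Qed.

Lemma card_shift_leq (N D d : nat) (P Q : pred nat) :
  (d + N <= D)%N -> (forall j, (j <= N)%N -> P j -> Q (d + j)%N) ->
  (#|[set j : 'I_N.+1 | P j]| <= #|[set j : 'I_D.+1 | Q j]|)%N.
Proof.
move=> le_dND PQ; pose f (j : 'I_N.+1) : 'I_D.+1 := inord (d + j).
have f_lt (j : 'I_N.+1) : (d + j < D.+1)%N by have := ltn_ord j; lia.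
rewrite -(card_in_imset (f := f)); last first.
  move=> a b _ _ /(congr1 val); rewrite /f /= !inordK // => ab; apply: val_inj => /=; lia.
apply: subset_leq_card; apply/subsetP => z /imsetP [j Pj ->].
by move: Pj; rewrite !inE /f inordK // => Pj; apply: PQ => //; rewrite -ltnS ltn_ord.
Qed.

Section HammingScheme.

Variables D q : nat.
Implicit Types (x y u w : word D q) (Y : {set word D q}).

Lemma hdist_le u w : (hdist u w <= D)%N.
Proof. by apply: leq_trans (max_card _) _; rewrite card_ord. Qed.

Lemma hwt_le u : (hwt u <= D)%N.
Proof. by apply: leq_trans (max_card _) _; rewrite card_ord. Qed.

Lemma hdist_wsupp x y : (forall i, val (x i) = 0%N) -> hdist x y = hwt y.
Proof.
move=> x0; apply: eq_card => l; rewrite !inE.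
by rewrite -(inj_eq val_inj) x0 eq_sym.
Qed.

Lemma mxv_Eidem_chiv Y j u :
  mxv (@Eidem D q j) (chiv Y) u
  = (#|[set: word D q]|%:R)^-1 * \sum_(w in Y) kraw D q j (hdist u w).
Proof.
rewrite /mxv /Eidem /chiv mulr_sumr [RHS]big_mkcond /=; apply: eq_bigr => w _.
have d_lt : (hdist u w < D.+1)%N by rewrite ltnS hdist_le.
rewrite (bigD1 (Ordinal d_lt)) //= big1 ?addr0.
  by rewrite /assoc eqxx mulr1; case: (w \in Y); rewrite ?mulr1 ?mulr0.
move=> i iu; rewrite /assoc.
suff /negbTE -> : hdist u w != i by rewrite mulr0.
by apply: contra iu => /eqP ui; apply/eqP/val_inj.
Qed.

Lemma nonzeroPn (v : vec D q) : ~~ nonzero v -> forall u, v u = 0.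
Proof. by rewrite negb_exists => /forallP v0 u; have := v0 u; rewrite negbK => /eqP. Qed.

Lemma sum_coord_weight_Eidem_eq0 Y j : (0 < q)%N ->
  ~~ nonzero (mxv (@Eidem D q j) (chiv Y)) ->
  forall C : {set 'I_D}, #|C| = j -> \sum_(y in Y) coord_weight q C (wsupp y) = 0.
Proof.
move=> q_gt0 Ej0 C cardC.
have : \sum_u mxv (@Eidem D q j) (chiv Y) u * coord_weight q C (wsupp u) = 0.
  by rewrite big1 // => u _; rewrite nonzeroPn // mul0r.
under eq_bigr => u _ do rewrite mxv_Eidem_chiv -mulrA mulr_suml.
rewrite -mulr_sumr exchange_big /=.
under eq_bigr => w _ do rewrite kraw_coord_weight_eigen // cardC eqxx.
rewrite -mulr_sumr cardsT card_ffun !card_ord natrX mulrA mulVf ?mul1r //.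
by rewrite expf_eq0 pnatr_eq0 negb_and -lt0n q_gt0 orbT.
Qed.

Lemma Estar_chiv_nonzero x Y y : (forall i, val (x i) = 0%N) -> y \in Y ->
  nonzero (mxv (Estar (hwt y) x) (chiv Y)).
Proof.
move=> x0 Yy; apply/existsP; exists y.
rewrite /mxv /Estar (bigD1 y) //= eqxx hdist_wsupp // eqxx big1 ?addr0.
  by rewrite /chiv Yy mul1r oner_eq0.
by move=> w wy; rewrite eq_sym (negbTE wy) mul0r.
Qed.

Lemma delta_x_le_hwt x Y y : (forall i, val (x i) = 0%N) -> y \in Y -> (0 < hwt y)%N ->
  (delta_x x (chiv Y) <= hwt y)%N.
Proof.
move=> x0 Yy hwt_gt0; rewrite /delta_x -add1n; apply: head_filter_iota_leq => //.
  by rewrite add1n ltnS hwt_le.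
exact: Estar_chiv_nonzero.
Qed.

Lemma delta_star_min Y j : (0 < j)%N -> (j < delta_star (chiv Y))%N ->
  ~~ nonzero (mxv (@Eidem D q j) (chiv Y)).
Proof.
move=> j_gt0; have := @head_filter_iota_min
  (fun j => nonzero (mxv (@Eidem D q j) (chiv Y))) 1 D j j_gt0.
by rewrite add1n.
Qed.

End HammingScheme.

Section WeightDistribution.

Variables (D q : nat) (Y : {set word D q}).

Definition wcount (A : {set 'I_D}) (e i : nat) : nat :=
  #|[set y in Y | (hwt y == i) && (#|wsupp y :&: A| == e)]|.

Definition superset_sum (A : {set 'I_D}) (j' : nat) : algC :=
  \sum_(C : {set 'I_D} | (A \subset C) && (#|C :\: A| == j'))
    \sum_(y in Y) coord_weight q C (wsupp y).

Lemma superset_sum_wcount (A : {set 'I_D}) j' :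
  superset_sum A j' = \sum_(e < #|A|.+1) \sum_(i < D.+1)
     ((-1) ^+ e * (q - 1)%:R ^+ (#|A| - e) * kraw (D - #|A|) q j' (i - e)) * (wcount A e i)%:R.
Proof.
rewrite /superset_sum exchange_big /=.
under eq_bigr => y _ do rewrite sum_supersets_coord_weight coord_weightE.
have cardD y : #|wsupp y :\: A| = (hwt y - #|wsupp y :&: A|)%N.
  by rewrite /hwt -(cardsID A (wsupp y)); lia.
under eq_bigr => y _ do rewrite cardD.
rewrite (sum_by_two_statistics
   (fun e i => (-1) ^+ e * (q - 1)%:R ^+ (#|A| - e) * kraw (D - #|A|) q j' (i - e))
   (a := fun y => #|wsupp y :&: A|) (b := fun y => hwt y) (E := #|A|.+1) (I := D.+1)) //.
- by move=> y _; rewrite ltnS subset_leq_card // subsetIr.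
- by move=> y _; rewrite ltnS hwt_le.
Qed.

Lemma superset_sum_eq0 (A : {set 'I_D}) j' :
  (forall C : {set 'I_D}, #|C| = (#|A| + j')%N ->
     \sum_(y in Y) coord_weight q C (wsupp y) = 0) ->
  superset_sum A j' = 0.
Proof.
move=> C0; rewrite /superset_sum big1 // => C /andP [AC /eqP cardCA]; apply: C0.
by rewrite -cardCA -(cardsID A C) (setIidPr AC).
Qed.

Lemma wcount_delete_sum (A : {set 'I_D}) e i :
  \sum_(a in A) (wcount (A :\ a) e i)%:R
  = e.+1%:R * (wcount A e.+1 i)%:R + (#|A| - e)%:R * (wcount A e i)%:R :> algC.
Proof.
rewrite /wcount; under eq_bigr => a _ do rewrite natr_card_set_sum.
rewrite exchange_big /= !natr_card_set_sum !mulr_sumr -big_split /=; apply: eq_bigr => y _.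
case: (hwt y == i) => /=; last by rewrite big1 ?mulr0 ?addr0.
rewrite -(natr_card_set_sum A (fun a => #|wsupp y :&: (A :\ a)| == e)).
rewrite card_delete_meet natrD !natrM.
by case: (#|wsupp y :&: A| == e.+1); case: (#|wsupp y :&: A| == e) => /=; ring.
Qed.

Lemma wcount_lt A e i : (i < e)%N -> wcount A e i = 0%N.
Proof.
move=> lt_ie; apply/eqP; rewrite cards_eq0; apply/eqP/setP => y; rewrite !inE.
case: (y \in Y) => //=; apply/negbTE; rewrite negb_and.
case: (eqVneq (hwt y) i) => //= yi; apply/negP => /eqP yAe.
have : (#|wsupp y :&: A| <= hwt y)%N by rewrite subset_leq_card // subsetIl.
by rewrite yAe yi; lia.
Qed.

Lemma wcount_gt_card (A : {set 'I_D}) e i : (#|A| < e)%N -> wcount A e i = 0%N.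
Proof.
move=> lt_Ae; apply/eqP; rewrite cards_eq0; apply/eqP/setP => y; rewrite !inE.
case: (y \in Y) => //=; apply/negbTE; rewrite negb_and; apply/orP; right.
have : (#|wsupp y :&: A| <= #|A|)%N by rewrite subset_leq_card // subsetIr.
by apply: contraTN => /eqP ->; lia.
Qed.

Lemma wcount0_large (A : {set 'I_D}) i : (D < i + #|A|)%N -> wcount A 0 i = 0%N.
Proof.
move=> lt_D; apply/eqP; rewrite cards_eq0; apply/eqP/setP => y; rewrite !inE.
case: (y \in Y) => //=; apply/negbTE; rewrite negb_and.
case: (eqVneq (hwt y) i) => //= yi; apply/negP; rewrite cards_eq0 => /eqP yA.
have : (hwt y <= #|~: A|)%N.
  apply: subset_leq_card; apply/subsetP => l ly; rewrite inE; apply/negP => lA.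
  by have := in_set0 l; rewrite -yA inE ly lA.
by have := cardsC A; rewrite card_ord yi; lia.
Qed.

Lemma wcount_neq0 A e i : wcount A e i != 0%N -> exists2 y, y \in Y & hwt y = i.
Proof.
rewrite -lt0n card_gt0 => /set0Pn [y]; rewrite !inE => /andP [Yy /andP [/eqP yi _]].
by exists y.
Qed.

End WeightDistribution.

Section InductionStep.

Variables (D q : nat) (x : word D q) (Y : {set word D q}) (d : nat) (A A' : {set 'I_D}).
Hypotheses (q_gt1 : (1 < q)%N) (x0 : forall i, val (x i) = 0%N) (d_gt0 : (0 < d)%N).
Hypothesis IH : forall B B' : {set 'I_D}, #|B| = d.-1 -> #|B'| = d.-1 ->
  forall e i, wcount Y B e i = wcount Y B' e i.
Hypotheses (cardA : #|A| = d) (cardA' : #|A'| = d).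

Let q_gt0 : (0 < q)%N := ltnW q_gt1.

Let diff i : algC := (wcount Y A d i)%:R - (wcount Y A' d i)%:R.

Lemma sum_delete_wcount_eq e i :
  \sum_(a in A) (wcount Y (A :\ a) e i)%:R = \sum_(a in A') (wcount Y (A' :\ a) e i)%:R :> algC.
Proof.
have [a0 a0A] : exists a0, a0 \in A by apply/set0Pn; rewrite -card_gt0 cardA.
have cardAa : #|A :\ a0| = d.-1 by move: cardA; rewrite (cardsD1 a0 A) a0A; lia.
have wcountE (B : {set 'I_D}) a : #|B| = d -> a \in B ->
    (wcount Y (B :\ a) e i)%:R = (wcount Y (A :\ a0) e i)%:R :> algC.
  by move=> cardB aB; congr (_%:R); apply: IH => //; move: cardB; rewrite (cardsD1 a B) aB; lia.
rewrite (eq_bigr _ (fun a => wcountE A a cardA)) (eq_bigr _ (fun a => wcountE A' a cardA')).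
by rewrite !sumr_const cardA cardA'.
Qed.

Lemma wcount_diff_binomial i e : (e <= d)%N ->
  (wcount Y A e i)%:R - (wcount Y A' e i)%:R = (-1) ^+ (d - e) * 'C(d, e)%:R * diff i :> algC.
Proof.
apply: (alternating_binomial_rec (f := fun e => (wcount Y A e i)%:R - (wcount Y A' e i)%:R)).
move=> {}e _; have := wcount_delete_sum Y A' e i; have := wcount_delete_sum Y A e i.
rewrite sum_delete_wcount_eq cardA cardA' => -> /eqP; rewrite -subr_eq0 => /eqP.
by move=> <-; ring.
Qed.

Lemma diff_low i : (i < d)%N -> diff i = 0.
Proof. by move=> lt_id; rewrite /diff !wcount_lt // subrr. Qed.

Lemma diff_high i : (D - d < i)%N -> diff i = 0.
Proof.
move=> lt_i; have := wcount_diff_binomial i (leq0n d).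
rewrite !wcount0_large ?cardA ?cardA' ?subrr; try lia.
by rewrite subn0 bin0 mulr1 => /esym /eqP; rewrite mulf_eq0 signr_eq0 => /eqP.
Qed.

Lemma wcount_eq_of_diff : (forall i, diff i = 0) -> forall e i, wcount Y A e i = wcount Y A' e i.
Proof.
move=> diff0 e i; case: (leqP e d) => [le_ed|lt_de]; last by rewrite !wcount_gt_card ?cardA ?cardA'.
by have /eqP := wcount_diff_binomial i le_ed; rewrite diff0 mulr0 subr_eq0 eqr_nat => /eqP.
Qed.

Let N := (D - d - d)%N.

Let q_exp_neq0 : (- (q%:R)) ^+ d != 0 :> algC.
Proof. by rewrite expf_eq0 oppr_eq0 pnatr_eq0 negb_and -lt0n q_gt0 orbT. Qed.

(* The superset sums see the top-level differences through a Krawtchouk transform of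
   length D - 2d (Vandermonde-type convolution of the generating polynomials). *)
Lemma superset_sum_diff j' : (d + d <= D)%N ->
  superset_sum Y A j' - superset_sum Y A' j'
  = (- (q%:R)) ^+ d * \sum_(i < N.+1) kraw N q j' i * diff (d + i).
Proof.
move=> le_ddD; rewrite !superset_sum_wcount cardA cardA' -sumrB.
pose G i := diff i * ((-1) ^+ d *
  \sum_(e < d.+1) 'C(d, e)%:R * (q - 1)%:R ^+ (d - e) * kraw (D - d) q j' (i - e)).
transitivity (\sum_(i < D.+1) G i).
  under eq_bigr => e _ do rewrite -sumrB.
  rewrite exchange_big /=; apply: eq_bigr => i _.
  rewrite /G mulr_sumr mulr_sumr; apply: eq_bigr => e _.
  have le_ed : (e <= d)%N by rewrite -ltnS.
  rewrite -mulrBr wcount_diff_binomial //.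
  have -> : (-1) ^+ d = (-1) ^+ e * (-1) ^+ (d - e) :> algC by rewrite -exprD subnKC.
  by ring.
rewrite (sum_ord_shift (G := G) le_ddD); last 2 first.
- by move=> i lt_id; rewrite /G diff_low ?mul0r.
- by move=> i lt_i; rewrite /G diff_high ?mul0r.
rewrite mulr_sumr; apply: eq_bigr => i _.
have le_iN : (i <= N)%N by rewrite -ltnS ltn_ord.
rewrite /G kraw_convolution //; try by rewrite /N in le_iN; lia.
have -> : (d + i - d = i)%N by lia.
by rewrite [in RHS]exprNn [LHS]mulrC -!mulrA.
Qed.

Lemma superset_sum_diff_eq0 j' : ~~ nonzero (mxv (@Eidem D q (d + j')) (chiv Y)) ->
  superset_sum Y A j' - superset_sum Y A' j' = 0.
Proof.
move=> Ej0; rewrite !superset_sum_eq0 ?subrr // => C cardC;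
  by apply: (sum_coord_weight_Eidem_eq0 q_gt0 Ej0); rewrite cardC ?cardA ?cardA'.
Qed.

Lemma diff_neq0_hwt i : diff i != 0 -> exists2 y, y \in Y & hwt y = i.
Proof.
move=> diff_neq0.
have : (wcount Y A d i != 0)%N || (wcount Y A' d i != 0)%N.
  apply: contraR diff_neq0; rewrite negb_or !negbK => /andP [/eqP wA /eqP wA'].
  by rewrite /diff wA wA' subrr.
by case/orP => /wcount_neq0.
Qed.

Lemma diff_eq0_delta_x : (d + d <= D)%N ->
  (#|[set j : 'I_D.+1 | (d <= j <= D - d)%N && nonzero (mxv (@Eidem D q j) (chiv Y))]| + d
     <= delta_x x (chiv Y))%N ->
  forall i, (i <= N)%N -> diff (d + i) = 0.
Proof.
move=> le_ddD card_le.
apply: (kraw_transform_sparse_eq0 (x := fun i => diff (d + i))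
  (y := fun j => superset_sum Y A j - superset_sum Y A' j) (s := delta_x x (chiv Y) - d)
  q_gt0 q_exp_neq0).
- by move=> j _; apply: superset_sum_diff.
- move=> i lt_i; apply/eqP; apply: contraTT lt_i => /diff_neq0_hwt [y Yy yw].
  by have := delta_x_le_hwt x0 Yy; rewrite yw; lia.
apply: leq_trans (@card_shift_leq N D d
  (fun j => superset_sum Y A j - superset_sum Y A' j != 0)
  (fun j => (d <= j <= D - d)%N && nonzero (mxv (@Eidem D q j) (chiv Y))) _ _) _.
- by rewrite /N; lia.
- move=> j le_jN /= Sj0; apply/andP; split; first by rewrite /N in le_jN; lia.
  by apply: contraR Sj0 => Ej0; rewrite superset_sum_diff_eq0.
- by move: card_le; lia.
Qed.

Lemma diff_eq0_delta_star : (d + d <= D)%N ->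
  (#|[set i : 'I_D.+1 | (d <= i <= D - d)%N && nonzero (mxv (Estar i x) (chiv Y))]| + d
     <= delta_star (chiv Y))%N ->
  forall i, (i <= N)%N -> diff (d + i) = 0.
Proof.
move=> le_ddD card_le.
apply: (kraw_transform_low_eq0 (x := fun i => diff (d + i)) (s := delta_star (chiv Y) - d)
  q_gt0).
  move=> j lt_j le_jN; apply/eqP.
  have Ej0 : ~~ nonzero (mxv (@Eidem D q (d + j)) (chiv Y)) by apply: delta_star_min; lia.
  have /eqP := superset_sum_diff_eq0 Ej0.
  by rewrite superset_sum_diff // mulf_eq0 (negbTE q_exp_neq0).
apply: leq_trans (@card_shift_leq N D d (fun j => diff (d + j) != 0)
  (fun i => (d <= i <= D - d)%N && nonzero (mxv (Estar i x) (chiv Y))) _ _) _.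
- by rewrite /N; lia.
- move=> j le_jN /= diff_neq0; apply/andP; split; first by rewrite /N in le_jN; lia.
  by have [y Yy <-] := diff_neq0_hwt diff_neq0; apply: Estar_chiv_nonzero.
- by move: card_le; lia.
Qed.

Lemma wcount_eq_step :
  (#|[set j : 'I_D.+1 | (d <= j <= D - d)%N && nonzero (mxv (@Eidem D q j) (chiv Y))]| + d
     <= delta_x x (chiv Y))%N \/
  (#|[set i : 'I_D.+1 | (d <= i <= D - d)%N && nonzero (mxv (Estar i x) (chiv Y))]| + d
     <= delta_star (chiv Y))%N ->
  forall e i, wcount Y A e i = wcount Y A' e i.
Proof.
move=> hyp; apply: wcount_eq_of_diff => i.
case: (ltnP i d) => [|le_di]; first exact: diff_low.
case: (leqP i (D - d)) => [le_i|]; last exact: diff_high.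
have le_ddD : (d + d <= D)%N by lia.
have le_iN : (i - d <= N)%N by rewrite /N; lia.
rewrite -(subnKC le_di).
by case: hyp => [/(diff_eq0_delta_x le_ddD)|/(diff_eq0_delta_star le_ddD)]; apply.
Qed.

End InductionStep.

Local Close Scope ring_scope.
Unset Implicit Arguments.

Theorem mainTheorem13 (D q : nat) (x : word D q) (Y : {set word D q}) (t : nat) :
  (1 <= D)%N -> (2 <= q)%N ->
  (forall i, val (x i) = 0%N) ->
  (1 < #|Y|)%N -> (#|Y| < #|[set: word D q]|)%N ->
  (1 <= t <= D)%N ->
  (forall r : nat, (1 <= r <= t)%N ->
     (#|[set j : 'I_D.+1 | (r <= j <= D - r)%N &&
                         nonzero (mxv (@Eidem D q j) (chiv Y))]| + r
        <= delta_x x (chiv Y))%N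
     \/
     (#|[set i : 'I_D.+1 | (r <= i <= D - r)%N &&
                         nonzero (mxv (Estar i x) (chiv Y))]| + r
        <= delta_star (chiv Y))%N) ->
  forall k : nat, (k <= D)%N ->
    (forall S S' : {set 'I_D}, #|S| = t -> #|S'| = t ->
       #|[set y in Y | (hwt y == k) && [disjoint wsupp y & S]]| =
       #|[set y in Y | (hwt y == k) && [disjoint wsupp y & S']]|)
    /\
    (forall S S' : {set 'I_D}, #|S| = t -> #|S'| = t ->
       #|[set y in Y | (hwt y == k) && (S \subset wsupp y)]| =
       #|[set y in Y | (hwt y == k) && (S' \subset wsupp y)]|).
Proof.
move=> _ q_gt1 x0 _ _ t_range delta_hyp k _.
have wcount_inv d : (d <= t)%N -> forall A A' : {set 'I_D}, #|A| = d -> #|A'| = d ->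
    forall e i, wcount Y A e i = wcount Y A' e i.
  elim: d => [|d IH] le_dt A A' cardA cardA'.
    by rewrite (cards0_eq cardA) (cards0_eq cardA').
  apply: (wcount_eq_step q_gt1 x0 (ltn0Sn d) _ cardA cardA' (delta_hyp d.+1 _)).
    by move=> B B' cardB cardB'; apply: IH => //; lia.
  by move: t_range le_dt; lia.
split=> S S' cardS cardS'.
  have disjointE (T : {set 'I_D}) : #|[set y in Y | (hwt y == k) && [disjoint wsupp y & T]]| = wcount Y T 0 k.
    by apply: eq_card => y; rewrite !inE -setI_eq0 cards_eq0.
  by rewrite !disjointE (wcount_inv t _ S S').
have subsetE (T : {set 'I_D}) : #|T| = t ->
    #|[set y in Y | (hwt y == k) && (T \subset wsupp y)]| = wcount Y T t k.
  by move=> cardT; apply: eq_card => y; rewrite !inE subsetEcardI cardT.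
by rewrite !subsetE // (wcount_inv t _ S S').
Qed.
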